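(* Let $\mathfrak{S}=(\mathcal{X},\mathsf{S},\gamma,(\Lambda_{a})_{a\in\mathcal{A}})$ be a spectral decomposition system for the Euclidean space $\mathfrak{H}$ and let $D$ be an $\mathsf{S}$-invariant subset of $\mathcal{X}$. Then: (i) $\operatorname{int}\gamma^{-1}(D)=\gamma^{-1}(\operatorname{int}D)$; (ii) $\overline{\gamma^{-1}(D)}=\gamma^{-1}(\overline{D})$ (closures); (iii) $\gamma^{-1}(D)$ is closed if and only if $D$ is closed; (iv) $\gamma^{-1}(D)$ is convex if and only if $D$ is convex.
   Context: A Euclidean space is a finite-dimensional real inner product space; inner products are written $\langle\cdot,\cdot\rangle$ and norms $\|\cdot\|$. Let $\mathfrak{H}$ and $\mathcal{X}$ be Euclidean spaces, let $\mathsf{S}$ be a group acting on $\mathcal{X}$ by linear isometries, let $\gamma\colon\mathfrak{H}\to\mathcal{X}$, and let $(\Lambda_a)_{a\in\mathcal{A}}$ be a family of linear operators from $\mathcal{X}$ to $\mathfrak{H}$. The orbit of $x$ is $\mathsf{S}\cdot x=\{s\cdot x: s\in\mathsf{S}\}$; a map $f$ on $\mathcal{X}$ is $\mathsf{S}$-invariant if $f(s\cdot x)=f(x)$ for all $s,x$; a subset $D$ of $\mathcal{X}$ is $\mathsf{S}$-invariant if $s\cdot x\in D$ whenever $x\in D$, $s\in\mathsf{S}$. The tuple is a spectral decomposition system for $\mathfrak{H}$ if: [A] every $\Lambda_a$ is an isometry; [B] there exists an $\mathsf{S}$-invariant $\tau\colon\mathcal{X}\to\mathcal{X}$ with $\tau(x)\in\mathsf{S}\cdot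 x$ for all $x$ and $\gamma\circ\Lambda_a=\tau$ for all $a$; [C] for every $X\in\mathfrak{H}$ there is $a$ with $X=\Lambda_a\gamma(X)$; [D] $\langle X,Y\rangle\leq\langle\gamma(X),\gamma(Y)\rangle$ for all $X,Y\in\mathfrak{H}$. *)

From HB Require Import structures.
From mathcomp Require Import all_boot all_order all_algebra.
From mathcomp Require Import all_classical all_reals all_analysis.
Set Implicit Arguments. Unset Strict Implicit. Unset Printing Implicit Defensive.
Import Order.TTheory GRing.Theory Num.Theory.
Import numFieldNormedType.Exports.
Local Open Scope classical_set_scope.
Local Open Scope ring_scope.

(* Euclidean spaces are modelled as 'rV[R]_n with the standard inner product
   (every n-dimensional Euclidean space is isometrically isomorphic to it).
   The topology is the canonical (product) topology of 'rV[R]_n, which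
   coincides with the Euclidean-norm topology. *)

Definition inner (R : realType) (n : nat) (x y : 'rV[R]_n) : R :=
  (x *m y^T) 0 0.

Definition enorm (R : realType) (n : nat) (x : 'rV[R]_n) : R :=
  Num.sqrt (inner x x).

Definition lin_isometry (R : realType) (m n : nat)
  (L : {linear 'rV[R]_m -> 'rV[R]_n}) : Prop :=
  forall x, enorm (L x) = enorm x.

Record isometric_group_action (R : realType) (m : nat) := IsoGroupAction {
  grp : Type;
  gmul : grp -> grp -> grp;
  gone : grp;
  ginv : grp -> grp;
  act : grp -> {linear 'rV[R]_m -> 'rV[R]_m};
  gmulA : forall a b c, gmul a (gmul b c) = gmul (gmul a b) c;
  gmul1 : forall a, gmul gone a = a;
  gmulV : forall a, gmul (ginv a) a = gone;
  act1 : forall x, act gone x = x;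
  actM : forall a b x, act (gmul a b) x = act a (act b x);
  act_iso : forall a, lin_isometry (act a)
}.

Definition orbit (R : realType) (m : nat) (G : isometric_group_action R m)
  (x : 'rV[R]_m) : set 'rV[R]_m :=
  [set y | exists s : grp G, y = act s x].

Definition invariant_fun (R : realType) (m : nat) (G : isometric_group_action R m)
  (T : Type) (f : 'rV[R]_m -> T) : Prop :=
  forall (s : grp G) x, f (act s x) = f x.

Definition invariant_set (R : realType) (m : nat) (G : isometric_group_action R m)
  (D : set 'rV[R]_m) : Prop :=
  forall (s : grp G) x, D x -> D (act s x).

(* Spectral decomposition system (X, S, gamma, (Lambda_a)_{a in A}) for H,
   with H = 'rV[R]_n, X = 'rV[R]_m. *)
Definition spectral_decomposition_system (R : realType) (n m : nat)
  (G : isometric_group_action R m) (gamma : 'rV[R]_n -> 'rV[R]_m)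
  (A : Type) (Lam : A -> {linear 'rV[R]_m -> 'rV[R]_n}) : Prop :=
  (* [A] *) (forall a, lin_isometry (Lam a)) /\
  (* [B] *) (exists tau : 'rV[R]_m -> 'rV[R]_m,
               invariant_fun G tau /\ (forall x, orbit G x (tau x)) /\
               (forall a x, gamma (Lam a x) = tau x)) /\
  (* [C] *) (forall X, exists a, X = Lam a (gamma X)) /\
  (* [D] *) (forall X Y, inner X Y <= inner (gamma X) (gamma Y)).

Definition convex_rV (R : realType) (n : nat) (C : set 'rV[R]_n) : Prop :=
  forall x y (t : R), C x -> C y -> 0 <= t -> t <= 1 ->
    C (t *: x + (1 - t) *: y).

From Pilot Require Import Defs.
From HB Require Import structures.
From mathcomp Require Import all_boot all_order all_algebra.
From mathcomp Require Import all_classical all_reals all_analysis.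
From mathcomp Require Import ring lra.
Import Order.TTheory GRing.Theory Num.Theory.
Import numFieldNormedType.Exports.
Local Open Scope classical_set_scope.
Local Open Scope ring_scope.
Set Implicit Arguments. Unset Strict Implicit. Unset Printing Implicit Defensive.

(* Because gamma preserves norms, [D] makes it nonexpansive, and each [Lam a]
   is a linear isometry, so both are continuous.  As [gamma \o Lam a = tau]
   maps every point into its orbit, an invariant [E] satisfies
   [Lam a @^-1` (gamma @^-1` E) = E]; closures (hence interiors and
   closedness) therefore correspond under the two continuous maps.
   For convexity, [Z = t X + (1 - t) Y] equals [Lam a (gamma Z)], so
   [gamma Z = Lam a^* Z = t Lam a^* X + (1 - t) Lam a^* Y]; by [D] no linear
   functional separates [Lam a^* W] from the compact orbit of [gamma W], so it
   lies in the convex hull of that orbit, which is compact by Caratheodory's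
   theorem. *)

Section Inner.
Variables (R : realType) (k : nat).
Implicit Types x y z : 'rV[R]_k.

Lemma innerE x y : inner x y = \sum_i x 0 i * y 0 i.
Proof. by rewrite /inner !mxE; apply: eq_bigr => i _; rewrite mxE. Qed.

Lemma innerC x y : inner x y = inner y x.
Proof. by rewrite !innerE; apply: eq_bigr => i _; rewrite mulrC. Qed.

Lemma innerDl x y z : inner (x + y) z = inner x z + inner y z.
Proof. by rewrite !innerE -big_split; apply: eq_bigr => i _; rewrite mxE mulrDl. Qed.

Lemma innerZl a x y : inner (a *: x) y = a * inner x y.
Proof. by rewrite !innerE mulr_sumr; apply: eq_bigr => i _; rewrite mxE mulrA. Qed.

Lemma innerBl x y z : inner (x - y) z = inner x z - inner y z.
Proof. by rewrite -scaleN1r innerDl innerZl mulN1r. Qed.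

Lemma innerDr x y z : inner z (x + y) = inner z x + inner z y.
Proof. by rewrite !(innerC z) innerDl. Qed.

Lemma innerZr a x y : inner y (a *: x) = a * inner y x.
Proof. by rewrite !(innerC y) innerZl. Qed.

Lemma innerBr x y z : inner z (x - y) = inner z x - inner z y.
Proof. by rewrite !(innerC z) innerBl. Qed.

Lemma inner_selfD x y :
  inner (x + y) (x + y) = inner x x + inner y y + 2 * inner x y.
Proof. rewrite innerDl !innerDr (innerC y x); ring. Qed.

Lemma inner_selfB x y :
  inner (x - y) (x - y) = inner x x + inner y y - 2 * inner x y.
Proof. rewrite innerBl !innerBr (innerC y x); ring. Qed.

Lemma inner_self_ge0 x : 0 <= inner x x.
Proof. by rewrite innerE; apply: sumr_ge0 => i _; rewrite -expr2 sqr_ge0. Qed.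

Lemma inner_self_eq0 x : inner x x = 0 -> x = 0.
Proof.
rewrite innerE => /psumr_eq0P x0; apply/rowP => i; rewrite mxE.
have /eqP := x0 (fun j _ => ltac:(rewrite -expr2; exact: sqr_ge0)) i isT.
by rewrite -expr2 sqrf_eq0 => /eqP.
Qed.

Lemma sqr_enorm x : enorm x ^+ 2 = inner x x.
Proof. exact/sqr_sqrtr/inner_self_ge0. Qed.

Lemma norm_le_enorm x : `|x| <= enorm x.
Proof.
rewrite [leLHS](_ : _ = mx_norm x) // mx_normrE; apply/bigmax_leP.
split=> [|[i j] _ /=]; first exact: sqrtr_ge0.
rewrite (ord1 i) -(sqrtr_sqr (x 0 j)) ler_sqrt; last exact: inner_self_ge0.
rewrite innerE (bigD1 j) //= -expr2 lerDl.
by apply: sumr_ge0 => l _; rewrite -expr2 sqr_ge0.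
Qed.

Lemma enorm_le_norm x : enorm x <= k.+1%:R * `|x|.
Proof.
have coord_le i : `|x 0 i| <= `|x|.
  rewrite [leRHS](_ : _ = mx_norm x) // mx_normrE.
  by apply/bigmax_geP; right; exists (0, i).
rewrite -(ler_pXn2r (n := 2)) ?nnegrE ?sqrtr_ge0 ?mulr_ge0 // sqr_enorm.
apply: (@le_trans _ _ (\sum_(i < k) `|x| ^+ 2)).
  rewrite innerE; apply: ler_sum => i _; rewrite -expr2 -real_normK ?num_real //.
  by rewrite lerXn2r ?nnegrE ?coord_le.
rewrite sumr_const card_ord -[_ *+ k]mulr_natl exprMn ler_wpM2r ?sqr_ge0 //.
by rewrite -natrX ler_nat (leq_trans (leqnSn k)) // leq_pmulr.
Qed.

Lemma continuous_inner_self : continuous (fun x => inner x x).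
Proof.
rewrite (_ : (fun x => _) = fun x => \sum_i x 0 i * x 0 i); last first.
  by apply: funext => x; rewrite innerE.
apply: (continuous_big add_continuous) => i _ x.
by apply: continuousM; apply: coord_continuous.
Qed.

End Inner.

Lemma enorm_nonexpansive_continuous (R : realType) a b
    (f : 'rV[R]_a -> 'rV[R]_b) :
  (forall x y, enorm (f x - f y) <= enorm (x - y)) -> continuous f.
Proof.
move=> f_nonexp x; apply/(@cvgrPdist_lt _ _ _ (nbhs x)) => e e0; near=> y.
apply: le_lt_trans (norm_le_enorm _) _; apply: le_lt_trans (f_nonexp _ _) _.
apply: le_lt_trans (enorm_le_norm _) _; rewrite -ltr_pdivlMl //.
near: y; apply: cvgr_dist_lt; first exact: cvg_id.
by rewrite mulrC divr_gt0.
Unshelve. all: by end_near. Qed.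

Lemma nearest_point_obtuse (R : realType) k (x c0 c : 'rV[R]_k) :
  (forall t, 0 < t -> t <= 1 ->
     inner (x - c0) (x - c0) <=
     inner (x - (t *: c + (1 - t) *: c0)) (x - (t *: c + (1 - t) *: c0))) ->
  inner (c - c0) (x - c0) <= 0.
Proof.
move=> c0_nearest; set u := x - c0; set d := c - c0; set dl := inner d u.
rewrite leNgt; apply/negP => dl_gt0.
set q := inner d d; have q_ge0 : 0 <= q := inner_self_ge0 d.
(* the step size dl / (q + dl) lies in (0, 1) and strictly improves on c0 *)
pose t := dl / (q + dl).
have qdl_gt0 : 0 < q + dl by lra.
have tE : t * (q + dl) = dl by rewrite /t divfK // gt_eqF.
have t_gt0 : 0 < t by apply: divr_gt0.
have t_le1 : t <= 1 by rewrite /t ler_pdivrMr // mul1r; lra.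
have := c0_nearest t t_gt0 t_le1.
have -> : x - (t *: c + (1 - t) *: c0) = u - t *: d.
  by apply/rowP => i; rewrite /u /d !mxE; ring.
rewrite (inner_selfB u) innerZl !innerZr (innerC u d) -/dl -/q => improves.
have : 2 * (t * dl) <= t * (t * q) by lra.
nra.
Qed.

Lemma matrix_neq0P (R : nzRingType) p q (M : 'M[R]_(p, q)) :
  M != 0 -> exists i j, M i j != 0.
Proof.
move=> /eqP M_neq0; apply: contra_notP M_neq0 => no_entry.
apply/matrixP => i j; rewrite mxE.
by have [//|Mij] := eqVneq (M i j) 0; case: no_entry; exists i, j.
Qed.

Lemma sumr_eq0_exists_gt0 (R : realDomainType) j (mu : 'I_j -> R) i0 :
  mu i0 != 0 -> \sum_i mu i = 0 -> exists i, 0 < mu i.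
Proof.
move=> mu_i0 mu0; apply: contra_notP (negP mu_i0) => /forallNP mu_le0.
have nmu_ge0 i : 0 <= - mu i by rewrite oppr_ge0 leNgt; apply/negP/mu_le0.
have := psumr_eq0P (fun i (_ : true) => nmu_ge0 i).
by rewrite sumrN mu0 oppr0 => /(_ erefl i0 isT)/eqP; rewrite oppr_eq0 => ->.
Qed.

Section IteratedHull.
Variables (R : realType) (m : nat).
Implicit Types (K : set 'rV[R]_m) (t : R).

Definition segment_point (z : R * ('rV[R]_m * 'rV[R]_m)) : 'rV[R]_m :=
  z.1 *: z.2.1 + (1 - z.1) *: z.2.2.

Lemma continuous_segment_point : continuous segment_point.
Proof.
move=> z; apply: (@continuousD _ _ _ (fun z : R * _ => z.1 *: z.2.1)
  (fun z => (1 - z.1) *: z.2.2)).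
  apply: (@continuousZ _ _ _ (fun z : R * _ => z.1) (fun z => z.2.1)).
    exact: cvg_fst.
  by apply: cvg_comp; [exact: cvg_snd | exact: cvg_fst].
apply: (@continuousZ _ _ _ (fun z : R * _ => 1 - z.1) (fun z => z.2.2)).
  by apply: continuousB; [exact: cvg_cst | exact: cvg_fst].
by apply: cvg_comp; [exact: cvg_snd | exact: cvg_snd].
Qed.

(* [hull_iter K j] is the set of points [t0 a0 + (1 - t0)(t1 a1 + (1 - t1)(...))]
   with [j + 1] points [ai] of [K]. *)
Fixpoint hull_iter K j : set 'rV[R]_m :=
  if j is j'.+1 then segment_point @` (`[0, 1] `*` (K `*` hull_iter K j'))
  else K.

Lemma hull_iterS K j t a b : 0 <= t -> t <= 1 -> K a -> hull_iter K j b ->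
  hull_iter K j.+1 (t *: a + (1 - t) *: b).
Proof.
move=> t0 t1 Ka hb; exists (t, (a, b)) => //; split => //=.
by rewrite in_itv /= t0 t1.
Qed.

Lemma hull_iterSP K j x : hull_iter K j.+1 x -> exists t a b,
  [/\ 0 <= t, t <= 1, K a, hull_iter K j b & x = t *: a + (1 - t) *: b].
Proof.
case=> [[t [a b]]] [/= + [Ka hb]] <-; rewrite in_itv /= => /andP[t0 t1].
by exists t, a, b.
Qed.

Lemma hull_iter_neq0 K j : K !=set0 -> hull_iter K j !=set0.
Proof.
move=> [a Ka]; elim: j => [|j [b hb]]; first by exists a.
by exists (1 *: a + (1 - 1) *: b); apply: hull_iterS; rewrite ?ler01.
Qed.

Lemma hull_iter_compact K j : compact K -> compact (hull_iter K j).
Proof.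
move=> cK; elim: j => [//|j IH] /=.
apply: continuous_compact.
  exact: continuous_subspaceT continuous_segment_point.
by apply: compact_setX; [exact: segment_compact | exact: compact_setX].
Qed.

Lemma hull_iter_sub_convex K (D : set 'rV[R]_m) j :
  convex_rV D -> K `<=` D -> hull_iter K j `<=` D.
Proof.
move=> cD KD; elim: j => [//|j IH] x /hull_iterSP [t [a [b [t0 t1 Ka hb ->]]]].
by apply: cD => //; [exact: KD | exact: IH].
Qed.

Definition convex_comb K j (x : 'rV[R]_m) :=
  exists (l : 'I_j -> R) (v : 'I_j -> 'rV[R]_m),
  [/\ forall i, 0 <= l i, \sum_i l i = 1, forall i, K (v i)
    & x = \sum_i l i *: v i].

Lemma hull_iter_convex_comb K j : hull_iter K j `<=` convex_comb K j.+1.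
Proof.
elim: j => [|j IH] x.
  move=> Kx; exists (fun _ => 1), (fun _ => x).
  by split; rewrite ?big_ord1 ?scale1r.
move=> /hull_iterSP [t [a [b [t0 t1 Ka /IH [l [v [l0 l1 Kv ->]]] ->]]]].
pose l' (i : 'I_j.+2) := if (i : nat) == 0%N then t else (1 - t) * l (inord i.-1).
pose v' (i : 'I_j.+2) := if (i : nat) == 0%N then a else v (inord i.-1).
have l'S i : l' (lift ord0 i) = (1 - t) * l i by rewrite /l' lift0 /= inord_val.
have v'S i : v' (lift ord0 i) = v i by rewrite /v' lift0 /= inord_val.
exists l', v'; split.
- by move=> i; rewrite /l'; case: ifP => // _; rewrite mulr_ge0 ?subr_ge0.
- rewrite big_ord_recl; under eq_bigr do rewrite l'S.
  by rewrite -mulr_sumr l1 /l' /=; ring.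
- by move=> i; rewrite /v'; case: ifP.
- rewrite [RHS]big_ord_recl scaler_sumr; congr (_ + _).
  by apply: eq_bigr => i _; rewrite l'S v'S scalerA.
Qed.

Lemma convex_comb_hull_iter K j :
  K !=set0 -> convex_comb K j.+1 `<=` hull_iter K j.
Proof.
move=> K_neq0; elim: j => [|j IH] x [l [v [l0 l1 Kv ->]]].
  by move: l1; rewrite !big_ord1 => ->; rewrite scale1r.
move: l1; rewrite big_ord_recl => l1; rewrite big_ord_recl.
set s := \sum_(i < j.+1) l (lift ord0 i) in l1 *.
have [s0|s_gt0] := eqVneq s 0; last first.
  have {}s_gt0 : 0 < s by rewrite lt_def s_gt0 sumr_ge0.
  pose y := \sum_(i < j.+1) (l (lift ord0 i) / s) *: v (lift ord0 i).
  have hy : hull_iter K j y.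
    apply: IH; exists (fun i => l (lift ord0 i) / s), (fun i => v (lift ord0 i)).
    split => // [i|]; first by rewrite divr_ge0 // ltW.
    by rewrite -mulr_suml mulfV // gt_eqF.
  have -> : \sum_(i < j.+1) l (lift ord0 i) *: v (lift ord0 i)
            = (1 - l ord0) *: y.
    rewrite /y (_ : 1 - l ord0 = s); last by lra.
    rewrite scaler_sumr; apply: eq_bigr => i _.
    by rewrite scalerA mulrC divfK // gt_eqF.
  by apply: hull_iterS => //; rewrite -l1 lerDl ltW.
have lS0 i : l (lift ord0 i) = 0 by apply: (psumr_eq0P (fun i _ => l0 _) s0).
have [b hb] := hull_iter_neq0 j K_neq0.
rewrite big1 => [|i _]; last by rewrite lS0 scale0r.
have -> : l ord0 = 1 by rewrite -l1 s0 addr0.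
rewrite addr0 -[1 *: v ord0]addr0 -(scale0r b) -(subrr (1 : R)).
by apply: hull_iterS; rewrite ?ler01.
Qed.

Lemma affine_dependence j (v : 'I_j.+1 -> 'rV[R]_m) : (m.+1 <= j)%N ->
  exists mu : 'I_j.+1 -> R,
    [/\ exists i, 0 < mu i, \sum_i mu i *: v i = 0 & \sum_i mu i = 0].
Proof.
move=> mj; pose M : 'M[R]_(j.+1, m + 1) := row_mx (\matrix_i v i) (const_mx 1).
have : kermx M != 0.
  rewrite kermx_eq0 /row_free; apply: contraTN isT => /eqP rkM.
  by have := rank_leq_col M; rewrite rkM addn1 ltnNge mj.
case/matrix_neq0P => r [i0 ker_ri0].
have : row r (kermx M) *m M = 0 by rewrite -row_mul mulmx_ker row0.
rewrite mul_mx_row -row_mx0 => /eq_row_mx [wv w1].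
have mu_sum0 : \sum_i kermx M r i = 0.
  move/(congr1 (fun B : 'M[R]_1 => B 0 0)): w1; rewrite [RHS]mxE => w1.
  by rewrite -[RHS]w1 mxE; apply: eq_bigr => i _; rewrite !mxE mulr1.
exists (kermx M r); split=> //; first exact: sumr_eq0_exists_gt0 ker_ri0 _.
by rewrite -[RHS]wv mulmx_sum_row; apply: eq_bigr => i _; rewrite rowK [in RHS]mxE.
Qed.

Lemma convex_combS_shrink K j : (m.+1 <= j)%N ->
  convex_comb K j.+1 `<=` convex_comb K j.
Proof.
move=> mj x [l [v [l0 l1 Kv ->]]].
have [mu [[i0 mu_i0] muv0 mu0]] := affine_dependence v mj.
(* move along -mu until the first weight [l j0] vanishes *)
have [j0 mu_j0 j0_min] :=
  arg_minP (fun i => l i / mu i) (mu_i0 : (fun i => 0 < mu i) i0).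
pose th := l j0 / mu j0.
pose l' i := l i - th * mu i.
have l'_ge0 i : 0 <= l' i.
  rewrite subr_ge0; have [mu_i|mu_i] := ltP 0 (mu i).
    by rewrite -ler_pdivlMr // j0_min.
  exact: le_trans (mulr_ge0_le0 (divr_ge0 (l0 j0) (ltW mu_j0)) mu_i) (l0 i).
have l'_j0 : l' j0 = 0 by rewrite /l' /th divfK ?subrr // gt_eqF.
have l'_sum : \sum_i l' i = 1 by rewrite sumrB -mulr_sumr mu0 mulr0 subr0.
have l'_comb : \sum_i l' i *: v i = \sum_i l i *: v i.
  under eq_bigr do rewrite scalerBl -scalerA.
  by rewrite sumrB -scaler_sumr muv0 scaler0 subr0.
exists (fun i => l' (lift j0 i)), (fun i => v (lift j0 i)); split => //.
- by rewrite -l'_sum (bigD1_ord j0) //= l'_j0 add0r.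
- by rewrite -l'_comb (bigD1_ord j0) //= l'_j0 scale0r add0r.
Qed.

Lemma caratheodory K j : (m.+1 <= j)%N -> convex_comb K j `<=` convex_comb K m.+1.
Proof.
elim: j => [//|j IH]; rewrite leq_eqVlt => /orP[/eqP <- //|]; rewrite ltnS => mj.
by move=> x /(convex_combS_shrink mj) /(IH mj).
Qed.

Lemma hull_iter_step K a c t : K a -> hull_iter K m c -> 0 <= t -> t <= 1 ->
  hull_iter K m (t *: a + (1 - t) *: c).
Proof.
move=> Ka hc t0 t1; apply: convex_comb_hull_iter; first by exists a.
by apply: (@caratheodory _ m.+2) => //; apply/hull_iter_convex_comb/hull_iterS.
Qed.

(* A point that no linear functional separates from a compact [K] lies in every
   convex superset of [K]: it is its own nearest point in [hull_iter K m],
   which is compact and, by Caratheodory, stable under steps towards [K]. *)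
Lemma mem_convex_of_unseparated K (D : set 'rV[R]_m) x :
  compact K -> K !=set0 -> convex_rV D -> K `<=` D ->
  (forall u, exists2 c, K c & inner x u <= inner c u) -> D x.
Proof.
move=> cK K_neq0 cD KD x_unsep.
have dist_cont : continuous (fun y : 'rV[R]_m => inner (x - y) (x - y)).
  move=> y; apply: (@continuous_comp _ _ _ (fun y : 'rV[R]_m => x - y)
    (fun z => inner z z)); last exact: continuous_inner_self.
  by apply: (@cvgB _ _ _ _ (@nbhs_filter _ y) (fun=> x) id);
    [exact: cvg_cst | exact: cvg_id].
have [c0 /set_mem hc0 c0_nearest] := EVT_min_rV (hull_iter_neq0 m K_neq0)
  (hull_iter_compact (j := m) cK) (continuous_subspaceT dist_cont).
have obtuse c : K c -> inner (c - c0) (x - c0) <= 0.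
  move=> Kc; apply: nearest_point_obtuse => t t0 t1.
  by apply/c0_nearest/mem_set/hull_iter_step => //; exact: ltW.
have [c Kc xc] := x_unsep (x - c0).
have /inner_self_eq0/eqP : inner (x - c0) (x - c0) = 0.
  apply/eqP; rewrite eq_le inner_self_ge0 andbT.
  by have := obtuse c Kc; rewrite !innerBl; lra.
by rewrite subr_eq0 => /eqP ->; exact: hull_iter_sub_convex hc0.
Qed.

End IteratedHull.

Section LinearIsometry.
Variables (R : realType) (a b : nat) (L : {linear 'rV[R]_a -> 'rV[R]_b}).
Hypothesis L_iso : lin_isometry L.

Lemma lin_isometry_inner_self x : inner (L x) (L x) = inner x x.
Proof. by rewrite -!sqr_enorm L_iso. Qed.

Lemma lin_isometry_inner x y : inner (L x) (L y) = inner x y.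
Proof.
have := lin_isometry_inner_self (x + y).
rewrite linearD !inner_selfD !lin_isometry_inner_self; lra.
Qed.

Lemma lin_isometry_continuous : continuous L.
Proof. by apply: enorm_nonexpansive_continuous => x y; rewrite -linearB L_iso. Qed.

End LinearIsometry.

Section Adjoint.
Variables (R : realType) (a b : nat) (L : {linear 'rV[R]_a -> 'rV[R]_b}).

Definition adjoint (w : 'rV[R]_b) : 'rV[R]_a := w *m (lin1_mx L)^T.

Lemma inner_adjoint w u : inner (adjoint w) u = inner w (L u).
Proof. by rewrite /inner /adjoint -mul_rV_lin1 trmx_mul mulmxA. Qed.

Lemma adjoint_comb s t w z :
  adjoint (s *: w + t *: z) = s *: adjoint w + t *: adjoint z.
Proof. by rewrite /adjoint mulmxDl !scalemxAl. Qed.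

Lemma lin_isometry_adjointK : lin_isometry L -> cancel L adjoint.
Proof.
move=> L_iso w; apply/eqP; rewrite -subr_eq0; apply/eqP/inner_self_eq0.
by rewrite innerBl inner_adjoint lin_isometry_inner // subrr.
Qed.

End Adjoint.

Section IsometricAction.
Variables (R : realType) (m : nat) (G : isometric_group_action R m).
Implicit Types (E : set 'rV[R]_m) (s : grp G).

Lemma actVK s : cancel (act s) (act (ginv s)).
Proof. by move=> x; rewrite -actM gmulV act1. Qed.

Lemma act_inner s x y : inner (act s x) (act s y) = inner x y.
Proof. exact: (lin_isometry_inner (act_iso s)). Qed.

Lemma invariant_setP E : invariant_set G E -> forall s x, E (act s x) <-> E x.
Proof.
by move=> E_inv s x; split=> [/(E_inv (ginv s))|/E_inv//]; rewrite actVK.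
Qed.

Lemma invariant_setC E : invariant_set G E -> invariant_set G (~` E).
Proof. by move=> E_inv s x nEx /(invariant_setP E_inv). Qed.

Lemma orbit_compact p : closed (Defs.orbit G p) -> compact (Defs.orbit G p).
Proof.
move=> orbit_closed; apply: bounded_closed_compact orbit_closed.
apply: filterS (nbhs_pinfty_gt (num_real (enorm p))) => M enorm_lt y [s ->].
by apply/ltW/le_lt_trans/enorm_lt; rewrite (le_trans (norm_le_enorm _)) // act_iso.
Qed.

End IsometricAction.

Lemma closed_preimage_continuous (T U : topologicalType) (f : T -> U)
    (B : set U) :
  continuous f -> closed B -> closed (f @^-1` B).
Proof. by move=> f_cont; apply: preimage_closed => x _; exact: f_cont. Qed.

Lemma closure_preimage_continuous (T U : topologicalType) (f : T -> U)
    (B : set U) :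
  continuous f -> closure (f @^-1` B) `<=` f @^-1` closure B.
Proof.
move=> f_cont; rewrite [X in _ `<=` X](closure_id _).1.
  by apply: closureS => x Bfx; apply: subset_closure.
apply: closed_preimage_continuous f_cont _; exact: closed_closure.
Qed.

Section SpectralDecompositionSystem.
Variables (R : realType) (n m : nat) (G : isometric_group_action R m)
  (gamma : 'rV[R]_n -> 'rV[R]_m) (A : Type)
  (Lam : A -> {linear 'rV[R]_m -> 'rV[R]_n}) (tau : 'rV[R]_m -> 'rV[R]_m).
Hypotheses (Lam_iso : forall a, lin_isometry (Lam a))
  (tau_invariant : invariant_fun G tau)
  (tau_orbit : forall x, Defs.orbit G x (tau x))
  (gammaLam : forall a x, gamma (Lam a x) = tau x)
  (Lam_gamma : forall X, exists a, X = Lam a (gamma X))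
  (inner_le_gamma : forall X Y, inner X Y <= inner (gamma X) (gamma Y)).
Implicit Types (E : set 'rV[R]_m).

Lemma gamma_inner_self X : inner (gamma X) (gamma X) = inner X X.
Proof.
by have [a Xa] := Lam_gamma X; rewrite [in RHS]Xa lin_isometry_inner_self.
Qed.

Lemma gamma_continuous : continuous gamma.
Proof.
apply: enorm_nonexpansive_continuous => X Y.
rewrite ler_sqrt ?inner_self_ge0 // !inner_selfB !gamma_inner_self.
by have := inner_le_gamma X Y; lra.
Qed.

Lemma tau_continuous : continuous tau.
Proof.
have [a _] := Lam_gamma 0.
have -> : tau = gamma \o Lam a by apply: funext => x; rewrite /= gammaLam.
move=> x; apply: continuous_comp; last exact: gamma_continuous.
exact: lin_isometry_continuous.
Qed.

Lemma invariant_gammaLamP E a x :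
  invariant_set G E -> E (gamma (Lam a x)) <-> E x.
Proof.
by move=> E_inv; rewrite gammaLam; have [s ->] := tau_orbit x; apply: invariant_setP.
Qed.

Lemma preimage_gammaLam E a :
  invariant_set G E -> Lam a @^-1` (gamma @^-1` E) = E.
Proof. by move=> E_inv; apply/seteqP; split=> x /(invariant_gammaLamP a x E_inv). Qed.

Lemma closure_preimage_gamma E : invariant_set G E ->
  closure (gamma @^-1` E) = gamma @^-1` closure E.
Proof.
move=> E_inv; apply/seteqP; split.
  exact: closure_preimage_continuous gamma_continuous.
move=> X; have [a {2}->] := Lam_gamma X.
rewrite /= -{1}(preimage_gammaLam a E_inv).
exact: (closure_preimage_continuous (lin_isometry_continuous (Lam_iso a))).
Qed.

Lemma interior_preimage_gamma E : invariant_set G E ->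
  (gamma @^-1` E)° = gamma @^-1` E°.
Proof.
move=> E_inv; apply: setC_inj.
rewrite -closure_setC preimage_setC (closure_preimage_gamma (invariant_setC E_inv)).
by rewrite closure_setC -preimage_setC.
Qed.

Lemma closed_preimage_gamma E : invariant_set G E ->
  closed (gamma @^-1` E) <-> closed E.
Proof.
move=> E_inv; split=> [closed_pre|].
  have [a _] := Lam_gamma 0; rewrite -(preimage_gammaLam a E_inv).
  exact: closed_preimage_continuous (lin_isometry_continuous (Lam_iso a)) closed_pre.
exact: closed_preimage_continuous gamma_continuous.
Qed.

Lemma convex_of_convex_preimage_gamma E : invariant_set G E ->
  convex_rV (gamma @^-1` E) -> convex_rV E.
Proof.
move=> E_inv cvx x y t Ex Ey t0 t1; have [a _] := Lam_gamma 0.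
rewrite -(preimage_gammaLam a E_inv) /= linearD !linearZ.
by apply: cvx; rewrite //= invariant_gammaLamP.
Qed.

Lemma orbit_tauE p : Defs.orbit G p = tau @^-1` [set tau p].
Proof.
apply/seteqP; split=> [_ [s ->]|y /= tau_yp]; first by rewrite /= tau_invariant.
have [s tau_p] := tau_orbit p; have [r tau_y] := tau_orbit y.
by exists (gmul (ginv r) s); rewrite actM -tau_p -tau_yp tau_y actVK.
Qed.

Lemma orbit_compact_gamma p : compact (Defs.orbit G p).
Proof.
apply: orbit_compact; rewrite orbit_tauE.
apply: closed_preimage_continuous tau_continuous _.
apply: accessible_closed_set1; apply: hausdorff_accessible; exact: norm_hausdorff.
Qed.

(* By [D], [<Lam a^* W, u> = <W, Lam a u> <= <gamma W, tau u>], and [tau u]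
   lies in the orbit of [u]. *)
Lemma adjoint_Lam_mem E a W : invariant_set G E -> convex_rV E ->
  E (gamma W) -> E (adjoint (Lam a) W).
Proof.
move=> E_inv E_cvx EgW.
apply: (@mem_convex_of_unseparated _ _ (Defs.orbit G (gamma W))) => //.
- exact: orbit_compact_gamma.
- by exists (gamma W), (gone G); rewrite act1.
- by move=> _ [s ->]; apply: E_inv.
move=> u; have [s tau_u] := tau_orbit u.
exists (act (ginv s) (gamma W)); first by exists (ginv s).
rewrite inner_adjoint (le_trans (inner_le_gamma _ _)) // gammaLam tau_u.
by rewrite -(act_inner (ginv s)) actVK.
Qed.

Lemma convex_preimage_gamma E : invariant_set G E -> convex_rV E ->
  convex_rV (gamma @^-1` E).
Proof.
move=> E_inv E_cvx X Y t EX EY t0 t1 /=.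
have [a XYa] := Lam_gamma (t *: X + (1 - t) *: Y).
rewrite -(lin_isometry_adjointK (Lam_iso a) (gamma _)) -XYa adjoint_comb.
by apply: (E_cvx) => //; apply: adjoint_Lam_mem.
Qed.

End SpectralDecompositionSystem.

Theorem corollary4p8 (R : realType) (n m : nat)
  (G : isometric_group_action R m) (gamma : 'rV[R]_n -> 'rV[R]_m)
  (A : Type) (Lam : A -> {linear 'rV[R]_m -> 'rV[R]_n})
  (D : set 'rV[R]_m) :
  spectral_decomposition_system G gamma Lam ->
  invariant_set G D ->
  [/\ (gamma @^-1` D)° = gamma @^-1` (D°),
      closure (gamma @^-1` D) = gamma @^-1` (closure D),
      (closed (gamma @^-1` D) <-> closed D)
    & (convex_rV (gamma @^-1` D) <-> convex_rV D)].
Proof.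
move=> [Lam_iso [[tau [tau_inv [tau_orbit gammaLam]]] [Lam_gamma inner_le]]] D_inv.
split.
- exact: interior_preimage_gamma.
- exact: closure_preimage_gamma.
- exact: closed_preimage_gamma.
- by split; [exact: convex_of_convex_preimage_gamma | exact: convex_preimage_gamma].
Qed.
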